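(* Let $N\ge3$, $K(r)\equiv r^{\alpha}$ with $\alpha>-2$, and $p>p_S(\alpha)$. Assume $f$ satisfies (F0) and (F$\infty$). Then there exists $\mu_1>0$ such that for every $\mu\in[0,\mu_1)$, $(E_\mu)$ has a singular slow-decay solution.
   Context: $f:(0,\infty)\to[0,\infty)$ is continuous, not identically zero, and satisfies (F0): $f(r)=O(r^{\nu})$ as $r\to0$ for some $\nu>-2$; (F$\infty$): $f(r)=O(r^{-q})$ as $r\to\infty$ for some $q>N$. For $\mu\ge0$, $(E_\mu)$ is $u''+\frac{N-1}{r}u'+K(r)u^p+\mu f(r)=0$, $u>0$ for $r>0$. A singular solution is $u\in C^2(0,\infty)$ satisfying $(E_\mu)$ pointwise on $(0,\infty)$ with $\lim_{r\to0}u(r)=\infty$. It is slow-decay if $\limsup_{r\to\infty}r^{N-2}u(r)=\infty$. $p_S(\alpha):=\frac{N+2+2\alpha}{N-2}$. *)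

From Stdlib Require Import Reals.
From Coquelicot Require Import Coquelicot.
Open Scope R_scope.

Definition pS (N : nat) (alpha : R) : R := (INR N + 2 + 2 * alpha) / (INR N - 2).

Definition admissible_f (f : R -> R) : Prop :=
  (forall r, 0 < r -> continuous f r) /\
  (forall r, 0 < r -> 0 <= f r) /\
  (exists r, 0 < r /\ f r <> 0).

Definition F0 (f : R -> R) : Prop :=
  exists nu, -2 < nu /\ exists C delta, 0 < delta /\
    forall r, 0 < r < delta -> Rabs (f r) <= C * Rpower r nu.

Definition Finf (N : nat) (f : R -> R) : Prop :=
  exists q, INR N < q /\ exists C R0,
    forall r, R0 < r -> 0 < r -> Rabs (f r) <= C * Rpower r (- q).

Definition singular_solution (N : nat) (alpha p mu : R) (f u : R -> R) : Prop :=
  exists u1 u2 : R -> R,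
    (forall r, 0 < r ->
       is_derive u r (u1 r) /\ is_derive u1 r (u2 r) /\ continuous u2 r /\
       0 < u r /\
       u2 r + (INR N - 1) / r * u1 r + Rpower r alpha * Rpower (u r) p + mu * f r = 0) /\
    filterlim u (at_right 0) (Rbar_locally p_infty).

Definition slow_decay (N : nat) (u : R -> R) : Prop :=
  forall M R0 : R, exists r, R0 < r /\ 0 < r /\ M < r ^ (N - 2) * u r.

(* With [m = (2 + alpha) / (p - 1)], the substitution [u r = r^-m W (ln r)] turns the equation
   into the autonomous [W'' + a W' - b W + W^p + mu g = 0], where [a = N - 2 - 2 m > 0] and
   [b = m (N - 2 - m) > 0] precisely because [p > pS alpha], and where the forcing
   [g t = e^((m+2) t) f (e^t)] is bounded thanks to (F0) and (Finf).  The constant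
   [A = b^(1/(p-1))] solves the unforced equation; it is the singular solution [A r^-m].
   For small [mu] we perturb it: [W = A + phi], where [phi] is a fixed point of the bounded
   resolvent of the damped oscillator [y'' + a y' + beta y] (of sup-norm [4 / a^2]) applied to
   the remainder, and [beta] is chosen so close to the linearisation [(p - 1) b] that this map
   contracts on the ball [|phi| <= A / 2].  Then [u >= (A / 2) r^-m] blows up at [0], and
   since [m < N - 2], [r^(N-2) u] is unbounded at infinity. *)

From Stdlib Require Import Reals Lra Lia.
From Coquelicot Require Import Coquelicot.
Open Scope R_scope.

Lemma continuous_eps_delta (f : R -> R) x :
  continuous f x <->
  forall eps, 0 < eps -> exists d, 0 < d /\
    forall y, Rabs (y - x) < d -> Rabs (f y - f x) < eps.
Proof.
  unfold continuous; rewrite <- continuity_pt_filterlim. split.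
  - intros Hf eps Heps. destruct (Hf eps Heps) as [d [Hd Hy]].
    exists d; split; [exact Hd|]. intros y Hyx.
    destruct (Req_dec y x) as [->|Hne].
    + rewrite Rminus_eq_0, Rabs_R0; exact Heps.
    + apply Hy; split; [split; [exact I|auto]|exact Hyx].
  - intros Hf eps Heps. destruct (Hf eps Heps) as [d [Hd Hy]].
    exists d; split; [exact Hd|]. intros y [_ Hyx]. exact (Hy y Hyx).
Qed.

(* Instances of Coquelicot's generic rules at the operations of [R], which [apply] does not
   unify with the generic [mult], [plus] and [minus]. *)
Lemma continuous_Rmult (f g : R -> R) x :
  continuous f x -> continuous g x -> continuous (fun y => f y * g y) x.
Proof. intros; apply (continuous_mult f g); auto. Qed.

Lemma continuous_Rplus (f g : R -> R) x :
  continuous f x -> continuous g x -> continuous (fun y => f y + g y) x.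
Proof. intros; apply (continuous_plus f g); auto. Qed.

Lemma continuous_Rminus (f g : R -> R) x :
  continuous f x -> continuous g x -> continuous (fun y => f y - g y) x.
Proof. intros; apply (continuous_minus f g); auto. Qed.

Lemma continuous_Rmult_const (c : R) x : continuous (fun s => c * s) x.
Proof. apply (ex_derive_continuous (fun s => c * s)). auto_derive; auto. Qed.

Lemma is_derive_Rmult (f g : R -> R) x df dg :
  is_derive f x df -> is_derive g x dg ->
  is_derive (fun y => f y * g y) x (df * g x + f x * dg).
Proof. intros; apply (is_derive_mult f g); auto. intros; apply Rmult_comm. Qed.

Lemma is_derive_Rplus (f g : R -> R) x df dg :
  is_derive f x df -> is_derive g x dg -> is_derive (fun y => f y + g y) x (df + dg).
Proof. intros; apply (is_derive_plus f g); auto. Qed.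

Lemma is_derive_Rminus (f g : R -> R) x df dg :
  is_derive f x df -> is_derive g x dg -> is_derive (fun y => f y - g y) x (df - dg).
Proof. intros; apply (is_derive_minus f g); auto. Qed.

Lemma is_derive_eq (f : R -> R) x df df' : is_derive f x df -> df = df' -> is_derive f x df'.
Proof. intros H <-; exact H. Qed.

Lemma is_derive_continuous (f : R -> R) x df : is_derive f x df -> continuous f x.
Proof. intros Hf. apply (ex_derive_continuous f). exists df; exact Hf. Qed.

Lemma ex_RInt_everywhere_continuous (G : R -> R) x y :
  (forall s, continuous G s) -> ex_RInt G x y.
Proof. intros HG; apply (@ex_RInt_continuous R_CompleteNormedModule); intros; apply HG. Qed.

Lemma RInt_Rlincomb (f g : R -> R) k l x y :
  ex_RInt f x y -> ex_RInt g x y ->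
  RInt (fun s => k * f s - l * g s) x y = k * RInt f x y - l * RInt g x y.
Proof.
  intros Hf Hg.
  rewrite (RInt_minus (V := R_CompleteNormedModule) (fun s => k * f s) (fun s => l * g s)).
  - rewrite (RInt_scal (V := R_CompleteNormedModule) f), (RInt_scal (V := R_CompleteNormedModule) g)
      by assumption.
    reflexivity.
  - apply (ex_RInt_scal (V := R_CompleteNormedModule) f); assumption.
  - apply (ex_RInt_scal (V := R_CompleteNormedModule) g); assumption.
Qed.

Lemma is_lim_seq_real_Lim_seq (u : nat -> R) :
  ex_finite_lim_seq u -> is_lim_seq u (real (Lim_seq u)).
Proof. intros [l Hl]. rewrite (is_lim_seq_unique _ _ Hl). exact Hl. Qed.

Lemma is_lim_seq_bound (u : nat -> R) (l M : R) :
  is_lim_seq u l -> (exists N, forall n, (N <= n)%nat -> Rabs (u n) <= M) -> Rabs l <= M.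
Proof.
  intros Hu [N HN].
  apply (is_lim_seq_le_loc (fun n => Rabs (u n)) (fun _ => M) (Rabs l) M).
  - exists N; exact HN.
  - exact (is_lim_seq_abs _ _ Hu).
  - apply is_lim_seq_const.
Qed.

Lemma abs_sin_le x : 0 <= x -> Rabs (sin x) <= x.
Proof.
  intros Hx.
  destruct (MVT_gen sin 0 x cos) as [c [_ Hc]].
  - intros; apply is_derive_sin.
  - intros; apply continuity_sin.
  - rewrite sin_0, !Rminus_0_r in Hc. rewrite Hc, Rabs_mult, (Rabs_right x) by lra.
    assert (Rabs (cos c) <= 1) by (apply Rabs_le, COS_bound).
    pose proof (Rabs_pos (cos c)). nra.
Qed.

Lemma exp_opp_mul x : exp (- x) * exp x = 1.
Proof. rewrite <- exp_plus, Rplus_opp_l. apply exp_0. Qed.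

Lemma le_geom_vanishing x C q : 0 <= q < 1 -> (forall n, x <= C * q ^ n) -> x <= 0.
Proof.
  intros Hq Hx.
  assert (L : is_lim_seq (fun n => C * q ^ n) 0).
  { replace (Finite 0) with (Rbar_mult C 0) by (simpl; f_equal; ring).
    apply is_lim_seq_scal_l, is_lim_seq_geom. rewrite Rabs_right; lra. }
  exact (is_lim_seq_le (fun _ => x) _ x 0 Hx (is_lim_seq_const x) L).
Qed.

Lemma lipschitz_continuous (H : R -> R) L x :
  0 <= L -> (forall x y, Rabs (H x - H y) <= L * Rabs (x - y)) -> continuous H x.
Proof.
  intros HL HH. apply continuous_eps_delta. intros eps Heps.
  exists (eps / (L + 1)). split; [apply Rdiv_lt_0_compat; lra|].
  intros y Hy. eapply Rle_lt_trans; [apply HH|].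
  apply Rle_lt_trans with (L * (eps / (L + 1))); [apply Rmult_le_compat_l; lra|].
  apply Rmult_lt_reg_r with (L + 1); [lra|].
  replace (L * (eps / (L + 1)) * (L + 1)) with (L * eps) by (field; lra). nra.
Qed.

Lemma derive_bound_lipschitz (H dH : R -> R) rho L x y :
  (forall z, Rabs z <= rho -> is_derive H z (dH z)) ->
  (forall z, Rabs z <= rho -> Rabs (dH z) <= L) ->
  Rabs x <= rho -> Rabs y <= rho -> Rabs (H x - H y) <= L * Rabs (x - y).
Proof.
  intros HD HB Hx Hy.
  apply Rabs_le_between in Hx. apply Rabs_le_between in Hy.
  assert (Hseg : forall z, Rmin y x <= z <= Rmax y x -> Rabs z <= rho).
  { intros z Hz. apply Rabs_le. unfold Rmin, Rmax in Hz; destruct Rle_dec; lra. }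
  destruct (MVT_gen H y x dH) as [c [Hc E]].
  - intros z Hz. apply HD, Hseg; lra.
  - intros z Hz. apply continuity_pt_filterlim, (is_derive_continuous _ _ (dH z)), HD, Hseg, Hz.
  - rewrite E, Rabs_mult. apply Rmult_le_compat_r; [apply Rabs_pos|]. apply HB, Hseg, Hc.
Qed.

(* [int_{-oo}^t G] as the limit over the lower bounds [-n]; junk if that limit does not exist. *)
Definition RInt_minfty (G : R -> R) (t : R) : R :=
  real (Lim_seq (fun n => RInt G (- INR n) t)).

Section ExpBoundedIntegrand.

Variables (G : R -> R) (c B : R).
Hypothesis c_pos : 0 < c.
Hypothesis G_cont : forall s, continuous G s.
Hypothesis G_bound : forall s, Rabs (G s) <= B * exp (c * s).

Lemma RInt_exp_weight x y : RInt (fun s => B * exp (c * s)) x y = B / c * (exp (c * y) - exp (c * x)).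
Proof.
  apply is_RInt_unique.
  replace (B / c * (exp (c * y) - exp (c * x))) with (minus (B / c * exp (c * y)) (B / c * exp (c * x)))
    by (unfold minus, plus, opp; simpl; ring).
  apply (is_RInt_derive (fun s => B / c * exp (c * s))).
  - intros s _. auto_derive; auto. field. lra.
  - intros s _. apply continuous_Rmult; [apply continuous_const|].
    apply continuous_exp_comp, continuous_Rmult_const.
Qed.

Lemma abs_RInt_exp_bounded x y : x <= y -> Rabs (RInt G x y) <= B / c * exp (c * y).
Proof.
  intros Hxy.
  assert (HB : 0 <= B).
  { pose proof (G_bound 0). pose proof (Rabs_pos (G 0)). pose proof (exp_pos (c * 0)). nra. }
  eapply Rle_trans; [apply abs_RInt_le; auto; apply ex_RInt_everywhere_continuous; auto|].
  eapply Rle_trans; [apply (RInt_le _ (fun s => B * exp (c * s)) x y Hxy)|].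
  - apply ex_RInt_everywhere_continuous. intros s; apply continuous_Rabs_comp; auto.
  - apply ex_RInt_everywhere_continuous. intros s. apply continuous_Rmult; [apply continuous_const|].
    apply continuous_exp_comp, continuous_Rmult_const.
  - intros s _; apply G_bound.
  - rewrite RInt_exp_weight.
    pose proof (exp_pos (c * x)). assert (0 <= B / c) by (apply Rdiv_le_0_compat; lra). nra.
Qed.

Lemma is_lim_RInt_minfty t : is_lim_seq (fun n => RInt G (- INR n) t) (RInt_minfty G t).
Proof.
  apply is_lim_seq_real_Lim_seq, ex_lim_seq_cauchy_corr. intros eps.
  assert (Htail : is_lim_seq (fun n => B / c * exp (c * - INR n)) 0).
  { apply (is_lim_seq_ext (fun n => B / c * exp (- c) ^ n)).
    - intros n. rewrite <- Rpower_pow by apply exp_pos. unfold Rpower. rewrite ln_exp.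
      do 2 f_equal. ring.
    - replace (Finite 0) with (Rbar_mult (B / c) 0) by (simpl; f_equal; ring).
      apply is_lim_seq_scal_l, is_lim_seq_geom.
      rewrite Rabs_right by (left; apply exp_pos).
      rewrite <- exp_0. apply exp_increasing. lra. }
  apply is_lim_seq_spec in Htail. destruct (Htail eps) as [N HN].
  assert (Hkey : forall n m, (N <= m)%nat -> (m <= n)%nat ->
            Rabs (RInt G (- INR n) t - RInt G (- INR m) t) < eps).
  { intros n m Hm Hmn.
    assert (E : RInt G (- INR n) t = RInt G (- INR n) (- INR m) + RInt G (- INR m) t).
    { symmetry. apply (RInt_Chasles (V := R_CompleteNormedModule));
        apply ex_RInt_everywhere_continuous, G_cont. }
    rewrite E; unfold Rminus; rewrite Rplus_assoc, Rplus_opp_r, Rplus_0_r.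
    eapply Rle_lt_trans; [apply abs_RInt_exp_bounded; apply Ropp_le_contravar, le_INR; exact Hmn|].
    specialize (HN m Hm). rewrite Rminus_0_r in HN.
    eapply Rle_lt_trans; [apply Rle_abs|exact HN]. }
  exists N. intros n m Hn Hm.
  destruct (Nat.le_ge_cases m n) as [H|H].
  - apply Hkey; auto.
  - rewrite Rabs_minus_sym. apply Hkey; auto.
Qed.

Lemma is_derive_RInt_minfty t : is_derive (RInt_minfty G) t (G t).
Proof.
  assert (Hsplit : forall t, RInt_minfty G t = RInt_minfty G 0 + RInt G 0 t).
  { intros s.
    assert (L : is_lim_seq (fun n => RInt G (- INR n) s) (RInt_minfty G 0 + RInt G 0 s)).
    { apply (is_lim_seq_ext (fun n => RInt G (- INR n) 0 + RInt G 0 s)).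
      - intros n. apply (RInt_Chasles (V := R_CompleteNormedModule));
          apply ex_RInt_everywhere_continuous, G_cont.
      - apply is_lim_seq_plus'; [apply is_lim_RInt_minfty|apply is_lim_seq_const]. }
    unfold RInt_minfty at 1. rewrite (is_lim_seq_unique _ _ L). reflexivity. }
  apply (is_derive_ext (fun t => RInt_minfty G 0 + RInt G 0 t)); [intros; symmetry; apply Hsplit|].
  replace (G t) with (0 + G t) by ring.
  apply (is_derive_plus (fun _ => RInt_minfty G 0) (fun t => RInt G 0 t)).
  - exact (is_derive_const (K := R_AbsRing) (V := R_NormedModule) (RInt_minfty G 0) t).
  - apply (is_derive_RInt G (fun t => RInt G 0 t) 0 t); [|apply G_cont].
    apply filter_forall; intros.
    apply (RInt_correct (V := R_CompleteNormedModule)), ex_RInt_everywhere_continuous, G_cont.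
Qed.

End ExpBoundedIntegrand.

Lemma RInt_affine_exp_le (C k x t : R) : 0 <= C -> 0 < k -> x <= t ->
  RInt (fun s => C * ((t - s) * exp (k * s))) x t <= C * exp (k * t) / (k * k).
Proof.
  intros HC Hk Hxt.
  set (F := fun s => C * exp (k * s) * ((t - s) / k + 1 / (k * k))).
  assert (HF : RInt (fun s => C * ((t - s) * exp (k * s))) x t = F t - F x).
  { apply is_RInt_unique.
    replace (F t - F x) with (minus (F t) (F x)) by (unfold minus, plus, opp; simpl; ring).
    apply (is_RInt_derive F).
    - intros s _. unfold F. auto_derive; auto. field. lra.
    - intros s _. apply (ex_derive_continuous (fun s => C * ((t - s) * exp (k * s)))).
      auto_derive; auto. }
  assert (HFx : 0 <= F x).
  { unfold F. pose proof (exp_pos (k * x)).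
    assert (0 <= (t - x) / k) by (apply Rdiv_le_0_compat; lra).
    assert (0 < 1 / (k * k)) by (apply Rdiv_lt_0_compat; nra).
    apply Rmult_le_pos; nra. }
  rewrite HF. replace (C * exp (k * t) / (k * k)) with (F t) by (unfold F; field; lra). lra.
Qed.

Section DampedOscillator.

Variables a w : R.
Hypothesis a_pos : 0 < a.
Hypothesis w_pos : 0 < w.

Definition osc_weight (h G : R -> R) s := exp (a / 2 * s) * (h (w * s) * G s).

Definition osc_kernel (G : R -> R) t s := exp (a / 2 * s) * (sin (w * (t - s)) * G s).

Definition osc_moment (h G : R -> R) := RInt_minfty (osc_weight h G).

(* Variation of constants for [y'' + a y' + (a^2/4 + w^2) y = G]:
   [y t = 1/w * int_{-oo}^t exp (-a (t - s) / 2) sin (w (t - s)) G s ds],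
   with [sin (w t - w s)] expanded. *)
Definition osc_resolvent G t :=
  exp (- (a / 2 * t)) / w *
    (sin (w * t) * osc_moment cos G t - cos (w * t) * osc_moment sin G t).

Definition osc_phase G t :=
  exp (- (a / 2 * t)) *
    (cos (w * t) * osc_moment cos G t + sin (w * t) * osc_moment sin G t).

Definition osc_velocity G t := - (a / 2) * osc_resolvent G t + osc_phase G t.

Section BoundedForcing.

Variables (G : R -> R) (B : R).
Hypothesis G_cont : forall s, continuous G s.
Hypothesis G_bound : forall s, Rabs (G s) <= B.

Lemma osc_weight_continuous h s :
  (forall x, continuous h x) -> continuous (osc_weight h G) s.
Proof.
  intros Hh. unfold osc_weight. apply continuous_Rmult.
  - apply continuous_exp_comp, continuous_Rmult_const.
  - apply continuous_Rmult; [|apply G_cont].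
    apply (continuous_comp (fun s => w * s) h); [apply continuous_Rmult_const|apply Hh].
Qed.

Lemma abs_osc_weight_le h s :
  (forall x, Rabs (h x) <= 1) -> Rabs (osc_weight h G s) <= B * exp (a / 2 * s).
Proof.
  intros Hh. unfold osc_weight.
  rewrite !Rabs_mult, (Rabs_right (exp _)) by (left; apply exp_pos).
  pose proof (exp_pos (a / 2 * s)). pose proof (Hh (w * s)). pose proof (G_bound s).
  assert (Rabs (h (w * s)) * Rabs (G s) <= 1 * B)
    by (apply Rmult_le_compat; auto using Rabs_pos).
  nra.
Qed.

Lemma is_derive_osc_moment h t :
  (forall x, continuous h x) -> (forall x, Rabs (h x) <= 1) ->
  is_derive (osc_moment h G) t (osc_weight h G t).
Proof.
  intros Hc Hb. apply (is_derive_RInt_minfty _ (a / 2) B); [lra| |].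
  - intros s; apply osc_weight_continuous, Hc.
  - intros s; apply abs_osc_weight_le, Hb.
Qed.

Lemma is_lim_osc_moment h t :
  (forall x, continuous h x) -> (forall x, Rabs (h x) <= 1) ->
  is_lim_seq (fun n => RInt (osc_weight h G) (- INR n) t) (osc_moment h G t).
Proof.
  intros Hc Hb. apply (is_lim_RInt_minfty _ (a / 2) B); [lra| |].
  - intros s; apply osc_weight_continuous, Hc.
  - intros s; apply abs_osc_weight_le, Hb.
Qed.

Lemma is_derive_osc_resolvent t :
  is_derive (osc_resolvent G) t (osc_velocity G t).
Proof.
  pose proof (is_derive_osc_moment cos t continuous_cos (fun x => Rabs_le _ _ (COS_bound x))) as Dc.
  pose proof (is_derive_osc_moment sin t continuous_sin (fun x => Rabs_le _ _ (SIN_bound x))) as Ds.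
  assert (De : is_derive (fun t => exp (- (a / 2 * t)) / w) t (- (a / 2) * (exp (- (a / 2 * t)) / w))).
  { auto_derive; auto. field. lra. }
  assert (DS : is_derive (fun t => sin (w * t)) t (w * cos (w * t))) by (auto_derive; auto; ring).
  assert (DC : is_derive (fun t => cos (w * t)) t (- w * sin (w * t))) by (auto_derive; auto; ring).
  unfold osc_resolvent. eapply is_derive_eq.
  - apply (is_derive_Rmult _ _ t _ _ De (is_derive_Rminus _ _ t _ _
             (is_derive_Rmult _ _ t _ _ DS Dc) (is_derive_Rmult _ _ t _ _ DC Ds))).
  - unfold osc_velocity, osc_resolvent, osc_phase, osc_weight. simpl. field. lra.
Qed.

Lemma is_derive_osc_phase t :
  is_derive (osc_phase G) t (- (a / 2) * osc_phase G t - w * w * osc_resolvent G t + G t).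
Proof.
  pose proof (is_derive_osc_moment cos t continuous_cos (fun x => Rabs_le _ _ (COS_bound x))) as Dc.
  pose proof (is_derive_osc_moment sin t continuous_sin (fun x => Rabs_le _ _ (SIN_bound x))) as Ds.
  assert (De : is_derive (fun t => exp (- (a / 2 * t))) t (- (a / 2) * exp (- (a / 2 * t))))
    by (auto_derive; auto; ring).
  assert (DS : is_derive (fun t => sin (w * t)) t (w * cos (w * t))) by (auto_derive; auto; ring).
  assert (DC : is_derive (fun t => cos (w * t)) t (- w * sin (w * t))) by (auto_derive; auto; ring).
  unfold osc_phase. eapply is_derive_eq.
  - apply (is_derive_Rmult _ _ t _ _ De (is_derive_Rplus _ _ t _ _
             (is_derive_Rmult _ _ t _ _ DC Dc) (is_derive_Rmult _ _ t _ _ DS Ds))).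
  - unfold osc_resolvent, osc_weight. simpl.
    pose proof (exp_opp_mul (a / 2 * t)) as E. pose proof (sin2_cos2 (w * t)) as SC.
    unfold Rsqr in SC.
    (* the forcing term appears as [exp (-x) exp x (sin^2 + cos^2) G] *)
    transitivity (- (a / 2) * exp (- (a / 2 * t)) *
        (cos (w * t) * osc_moment cos G t + sin (w * t) * osc_moment sin G t)
      - w * w * (exp (- (a / 2 * t)) / w *
        (sin (w * t) * osc_moment cos G t - cos (w * t) * osc_moment sin G t))
      + exp (- (a / 2 * t)) * exp (a / 2 * t)
          * (sin (w * t) * sin (w * t) + cos (w * t) * cos (w * t)) * G t).
    + field. lra.
    + rewrite E, SC. ring.
Qed.

Lemma is_derive_osc_velocity t :
  is_derive (osc_velocity G) t
    (G t - a * osc_velocity G t - (a * a / 4 + w * w) * osc_resolvent G t).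
Proof.
  unfold osc_velocity. eapply is_derive_eq.
  - apply is_derive_Rplus; [apply is_derive_scal, is_derive_osc_resolvent|apply is_derive_osc_phase].
  - unfold osc_velocity. simpl. field.
Qed.

Lemma is_lim_osc_resolvent t :
  is_lim_seq
    (fun n => exp (- (a / 2 * t)) / w * RInt (osc_kernel G t) (- INR n) t) (osc_resolvent G t).
Proof.
  pose proof (is_lim_osc_moment cos t continuous_cos (fun x => Rabs_le _ _ (COS_bound x))) as Lc.
  pose proof (is_lim_osc_moment sin t continuous_sin (fun x => Rabs_le _ _ (SIN_bound x))) as Ls.
  unfold osc_resolvent.
  apply (is_lim_seq_scal_l _ _
           (sin (w * t) * osc_moment cos G t - cos (w * t) * osc_moment sin G t)).
  apply (is_lim_seq_ext (fun n => sin (w * t) * RInt (osc_weight cos G) (- INR n) t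
                                 - cos (w * t) * RInt (osc_weight sin G) (- INR n) t)).
  - intros n.
    assert (Ic : ex_RInt (osc_weight cos G) (- INR n) t)
      by (apply ex_RInt_everywhere_continuous; intros; apply osc_weight_continuous, continuous_cos).
    assert (Is : ex_RInt (osc_weight sin G) (- INR n) t)
      by (apply ex_RInt_everywhere_continuous; intros; apply osc_weight_continuous, continuous_sin).
    rewrite <- RInt_Rlincomb by assumption.
    apply RInt_ext. intros s _. unfold osc_weight, osc_kernel.
    (* [RInt_ext] states the equation in Coquelicot's carrier, where [ring] does not apply *)
    match goal with |- ?x = ?y => change (@eq R x y) end.
    replace (w * (t - s)) with (w * t - w * s) by ring. rewrite sin_minus. ring.
  - apply is_lim_seq_minus';
      [apply (is_lim_seq_scal_l _ _ (osc_moment cos G t))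
      |apply (is_lim_seq_scal_l _ _ (osc_moment sin G t))]; assumption.
Qed.

Lemma osc_kernel_continuous t s : continuous (osc_kernel G t) s.
Proof.
  unfold osc_kernel. apply continuous_Rmult; [apply continuous_exp_comp, continuous_Rmult_const|].
  apply continuous_Rmult; [|apply G_cont]. apply continuous_sin_comp.
  apply (ex_derive_continuous (fun s => w * (t - s))). auto_derive; auto.
Qed.

Lemma abs_osc_truncated_le t (n : nat) : - INR n <= t ->
  Rabs (exp (- (a / 2 * t)) / w * RInt (osc_kernel G t) (- INR n) t) <= 4 * B / (a * a).
Proof.
  intros Hn.
  assert (HB0 : 0 <= B) by (pose proof (G_bound 0); pose proof (Rabs_pos (G 0)); lra).
  assert (Hint : Rabs (RInt (osc_kernel G t) (- INR n) t)
                 <= RInt (fun s => B * w * ((t - s) * exp (a / 2 * s))) (- INR n) t).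
  { eapply Rle_trans;
      [apply abs_RInt_le; auto; apply ex_RInt_everywhere_continuous, osc_kernel_continuous|].
    apply (RInt_le _ _ _ _ Hn).
    - apply ex_RInt_everywhere_continuous. intros s.
      apply continuous_Rabs_comp, osc_kernel_continuous.
    - apply ex_RInt_everywhere_continuous. intros s.
      apply (ex_derive_continuous (fun s => B * w * ((t - s) * exp (a / 2 * s)))). auto_derive; auto.
    - intros s [_ Hs]. unfold osc_kernel.
      rewrite !Rabs_mult, (Rabs_right (exp _)) by (left; apply exp_pos).
      pose proof (exp_pos (a / 2 * s)).
      assert (Rabs (sin (w * (t - s))) * Rabs (G s) <= w * (t - s) * B)
        by (apply Rmult_le_compat; auto using Rabs_pos; apply abs_sin_le; nra).
      nra. }
  pose proof (RInt_affine_exp_le (B * w) (a / 2) (- INR n) t ltac:(nra) ltac:(lra) Hn) as Hprim.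
  assert (Hw : 0 < exp (- (a / 2 * t)) / w) by (apply Rdiv_lt_0_compat; auto; apply exp_pos).
  rewrite Rabs_mult, (Rabs_right (exp _ / w)) by lra.
  apply Rle_trans with (exp (- (a / 2 * t)) / w * (B * w * exp (a / 2 * t) / (a / 2 * (a / 2)))).
  - apply Rmult_le_compat_l; lra.
  - pose proof (exp_opp_mul (a / 2 * t)) as E.
    replace (exp (- (a / 2 * t)) / w * (B * w * exp (a / 2 * t) / (a / 2 * (a / 2))))
      with (exp (- (a / 2 * t)) * exp (a / 2 * t) * (4 * B / (a * a))) by (field; lra).
    rewrite E. lra.
Qed.

Lemma abs_osc_resolvent_le t : Rabs (osc_resolvent G t) <= 4 * B / (a * a).
Proof.
  apply (is_lim_seq_bound _ _ _ (is_lim_osc_resolvent t)).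
  destruct (INR_unbounded (- t)) as [N0 HN0]. exists N0. intros n Hn.
  apply abs_osc_truncated_le. pose proof (le_INR _ _ Hn). lra.
Qed.

End BoundedForcing.

Lemma osc_resolvent_minus (G1 G2 : R -> R) B1 B2 t :
  (forall s, continuous G1 s) -> (forall s, Rabs (G1 s) <= B1) ->
  (forall s, continuous G2 s) -> (forall s, Rabs (G2 s) <= B2) ->
  osc_resolvent (fun s => G1 s - G2 s) t = osc_resolvent G1 t - osc_resolvent G2 t.
Proof.
  intros HG1 HB1 HG2 HB2.
  assert (H12 : forall s, Rabs (G1 s - G2 s) <= B1 + B2).
  { intros s. unfold Rminus. eapply Rle_trans; [apply Rabs_triang|].
    rewrite Rabs_Ropp. apply Rplus_le_compat; auto. }
  assert (L : is_lim_seq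
      (fun n => exp (- (a / 2 * t)) / w * RInt (osc_kernel (fun s => G1 s - G2 s) t) (- INR n) t)
      (osc_resolvent G1 t - osc_resolvent G2 t)).
  { apply (is_lim_seq_ext (fun n =>
        exp (- (a / 2 * t)) / w * RInt (osc_kernel G1 t) (- INR n) t
      - exp (- (a / 2 * t)) / w * RInt (osc_kernel G2 t) (- INR n) t)).
    - intros n. rewrite <- Rmult_minus_distr_l. f_equal.
      transitivity (1 * RInt (osc_kernel G1 t) (- INR n) t - 1 * RInt (osc_kernel G2 t) (- INR n) t);
        [ring|].
      rewrite <- RInt_Rlincomb.
      + apply RInt_ext. intros s _. unfold osc_kernel.
        match goal with |- ?x = ?y => change (@eq R x y) end. ring.
      + apply ex_RInt_everywhere_continuous, (osc_kernel_continuous G1); auto.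
      + apply ex_RInt_everywhere_continuous, (osc_kernel_continuous G2); auto.
    - apply is_lim_seq_minus'; [apply (is_lim_osc_resolvent G1 B1)|apply (is_lim_osc_resolvent G2 B2)];
        auto. }
  assert (L' := is_lim_osc_resolvent (fun s => G1 s - G2 s) (B1 + B2)
                  (fun s => continuous_Rminus _ _ s (HG1 s) (HG2 s)) H12 t).
  apply is_lim_seq_unique in L, L'. rewrite L in L'. injection L'. auto.
Qed.

End DampedOscillator.

Section SupNormContraction.

Variables (T : (R -> R) -> R -> R) (theta d : R).
Hypothesis theta_range : 0 <= theta < 1.
Hypothesis T_continuous :
  forall phi, (forall s, continuous phi s) -> forall t, continuous (T phi) t.
Hypothesis T_bounded :
  forall phi, (forall s, continuous phi s) -> forall t, Rabs (T phi t) <= d.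
Hypothesis T_contracts :
  forall phi1 phi2 D, (forall s, continuous phi1 s) -> (forall s, continuous phi2 s) ->
  (forall s, Rabs (phi1 s - phi2 s) <= D) ->
  forall t, Rabs (T phi1 t - T phi2 t) <= theta * D.

Fixpoint picard (n : nat) : R -> R :=
  match n with O => fun _ => 0 | S k => T (picard k) end.

Let c := d / (1 - theta).

Lemma picard_continuous n t : continuous (picard n) t.
Proof.
  revert t; induction n as [|n IH]; intros t; simpl.
  - apply continuous_const.
  - apply T_continuous, IH.
Qed.

Lemma picard_rate_nonneg n : 0 <= c * theta ^ n.
Proof.
  assert (0 <= d).
  { pose proof (T_bounded (fun _ : R => 0) (fun s => continuous_const 0 s) 0).
    pose proof (Rabs_pos (T (fun _ => 0) 0)). lra. }
  unfold c. apply Rmult_le_pos; [apply Rdiv_le_0_compat; lra|apply pow_le; lra].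
Qed.

Lemma picard_step n t : Rabs (picard (S n) t - picard n t) <= d * theta ^ n.
Proof.
  revert t; induction n as [|n IH]; intros t.
  - simpl. rewrite Rminus_0_r, Rmult_1_r. apply T_bounded. intros; apply continuous_const.
  - replace (d * theta ^ S n) with (theta * (d * theta ^ n)) by (simpl; ring).
    apply T_contracts; auto using picard_continuous.
Qed.

Lemma picard_cauchy n m t : (n <= m)%nat -> Rabs (picard m t - picard n t) <= c * theta ^ n.
Proof.
  intros Hnm. replace m with (n + (m - n))%nat by lia.
  assert (Hk : forall k, Rabs (picard (n + k) t - picard n t) <= c * theta ^ n * (1 - theta ^ k)).
  { induction k as [|k IH].
    - rewrite Nat.add_0_r, Rminus_eq_0, Rabs_R0. simpl. lra.
    - replace (n + S k)%nat with (S (n + k)) by lia.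
      replace (picard (S (n + k)) t - picard n t)
        with ((picard (S (n + k)) t - picard (n + k) t) + (picard (n + k) t - picard n t)) by ring.
      eapply Rle_trans; [apply Rabs_triang|].
      pose proof (picard_step (n + k) t) as Hs. rewrite pow_add in Hs.
      replace (c * theta ^ n * (1 - theta ^ S k))
        with (d * (theta ^ n * theta ^ k) + c * theta ^ n * (1 - theta ^ k))
        by (unfold c; simpl; field; lra).
      lra. }
  eapply Rle_trans; [apply Hk|].
  pose proof (picard_rate_nonneg n). pose proof (pow_le theta (m - n) (proj1 theta_range)). nra.
Qed.

Lemma picard_rate_small eps : 0 < eps -> exists N, c * theta ^ N < eps.
Proof.
  intros He.
  assert (L : is_lim_seq (fun n => c * theta ^ n) 0).
  { replace (Finite 0) with (Rbar_mult c 0) by (simpl; f_equal; ring).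
    apply is_lim_seq_scal_l, is_lim_seq_geom. rewrite Rabs_right; lra. }
  apply is_lim_seq_spec in L. destruct (L (mkposreal eps He)) as [N HN].
  exists N. specialize (HN N (Nat.le_refl N)). simpl in HN.
  rewrite Rminus_0_r in HN. eapply Rle_lt_trans; [apply Rle_abs|exact HN].
Qed.

Definition picard_limit t := real (Lim_seq (fun n => picard n t)).

Lemma is_lim_picard t : is_lim_seq (fun n => picard n t) (picard_limit t).
Proof.
  apply is_lim_seq_real_Lim_seq, ex_lim_seq_cauchy_corr. intros eps.
  destruct (picard_rate_small (eps / 2)) as [N HN]; [pose proof (cond_pos eps); lra|].
  exists N. intros n m Hn Hm.
  pose proof (picard_cauchy N n t Hn). pose proof (picard_cauchy N m t Hm).
  replace (picard n t - picard m t) with ((picard n t - picard N t) - (picard m t - picard N t))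
    by ring.
  eapply Rle_lt_trans; [apply Rabs_triang|]. rewrite Rabs_Ropp. lra.
Qed.

Lemma picard_limit_close n t : Rabs (picard_limit t - picard n t) <= c * theta ^ n.
Proof.
  apply (is_lim_seq_bound (fun m => picard m t - picard n t)).
  - apply (is_lim_seq_minus' _ _ _ _ (is_lim_picard t) (is_lim_seq_const _)).
  - exists n. intros m Hm. apply picard_cauchy, Hm.
Qed.

Lemma picard_limit_continuous t : continuous picard_limit t.
Proof.
  apply continuous_eps_delta. intros eps He.
  destruct (picard_rate_small (eps / 3)) as [N HN]; [lra|].
  destruct (proj1 (continuous_eps_delta _ _) (picard_continuous N t) (eps / 3))
    as [del [Hdel Hy]]; [lra|].
  exists del. split; [exact Hdel|]. intros y Hyd.
  pose proof (picard_limit_close N y). pose proof (picard_limit_close N t). pose proof (Hy y Hyd).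
  replace (picard_limit y - picard_limit t)
    with ((picard_limit y - picard N y) + (picard N y - picard N t) - (picard_limit t - picard N t))
    by ring.
  unfold Rminus at 1. eapply Rle_lt_trans; [apply Rabs_triang|]. rewrite Rabs_Ropp.
  eapply Rle_lt_trans; [apply Rplus_le_compat_r, Rabs_triang|]. lra.
Qed.

Lemma picard_limit_fixed t : T picard_limit t = picard_limit t.
Proof.
  assert (Hn : forall n, Rabs (T picard_limit t - picard_limit t) <= 2 * c * theta ^ n).
  { intros n.
    pose proof (T_contracts picard_limit (picard n) (c * theta ^ n) picard_limit_continuous
                  (picard_continuous n) (fun s => picard_limit_close n s) t).
    pose proof (picard_limit_close (S n) t) as HS. simpl in HS.
    replace (T picard_limit t - picard_limit t)
      with ((T picard_limit t - T (picard n) t) - (picard_limit t - T (picard n) t)) by ring.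
    eapply Rle_trans; [apply Rabs_triang|]. rewrite Rabs_Ropp.
    pose proof (picard_rate_nonneg n).
    assert (theta * (c * theta ^ n) <= c * theta ^ n) by nra.
    lra. }
  pose proof (le_geom_vanishing _ _ _ theta_range Hn).
  pose proof (Rabs_pos (T picard_limit t - picard_limit t)).
  assert (E : Rabs (T picard_limit t - picard_limit t) = 0) by lra.
  apply Rabs_eq_0 in E. lra.
Qed.

Lemma sup_contraction_fixpoint :
  exists phi, (forall t, continuous phi t) /\ (forall t, T phi t = phi t).
Proof. exists picard_limit. split; [apply picard_limit_continuous|apply picard_limit_fixed]. Qed.

End SupNormContraction.

Lemma Rpower_gt_0 x e : 0 < Rpower x e.
Proof. apply exp_pos. Qed.

Lemma is_derive_Rpower x e : 0 < x -> is_derive (fun y => Rpower y e) x (e * Rpower x (e - 1)).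
Proof. intros Hx. apply is_derive_Reals, derivable_pt_lim_power, Hx. Qed.

Definition clamp (rho x : R) := Rmax (- rho) (Rmin rho x).

Lemma abs_clamp_le rho x : 0 <= rho -> Rabs (clamp rho x) <= rho.
Proof. intros H. unfold clamp, Rmax, Rmin. apply Rabs_le. repeat destruct Rle_dec; lra. Qed.

Lemma clamp_lipschitz rho x y : 0 <= rho -> Rabs (clamp rho x - clamp rho y) <= Rabs (x - y).
Proof.
  intros H. unfold clamp, Rmax, Rmin.
  repeat destruct Rle_dec; unfold Rabs; repeat destruct Rcase_abs; lra.
Qed.

Lemma clamp_id rho x : Rabs x <= rho -> clamp rho x = x.
Proof.
  intros H. apply Rabs_le_between in H. unfold clamp, Rmax, Rmin. repeat destruct Rle_dec; lra.
Qed.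

Section PerturbedConstantSolution.

Variables a b p : R.
Hypothesis a_pos : 0 < a.
Hypothesis b_pos : 0 < b.
Hypothesis p_gt_1 : 1 < p.

(* [A] is the constant solution of [W'' + a W' - b W + W^p = 0], and [lam] the
   derivative of [W^p - b W] at [A]. *)
Definition A := Rpower b (1 / (p - 1)).
Definition lam := (p - 1) * b.
(* [beta > a^2/4] makes the oscillator kernel oscillate, while [|beta - lam| < a^2/4] keeps the
   remainder [nonlin] Lipschitz with constant below [a^2/4] near [0]. *)
Definition omega := sqrt (Rmax (lam - a * a / 4) (lam / 4)).
Definition beta := a * a / 4 + omega * omega.
(* [A + x] solves [W'' + a W' - b W + W^p + mu g = 0] iff
   [x'' + a x' + beta x = nonlin x - mu g]. *)
Definition nonlin x := beta * x - (Rpower (A + x) p - b * (A + x)).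
Definition nonlin' x := beta - (p * Rpower (A + x) (p - 1) - b).
Definition Lip := (Rabs (beta - lam) + a * a / 4) / 2.

Lemma A_pos : 0 < A.
Proof. apply Rpower_gt_0. Qed.

Lemma Rpower_A_pm1 : Rpower A (p - 1) = b.
Proof.
  unfold A. rewrite Rpower_mult. replace (1 / (p - 1) * (p - 1)) with 1 by (field; lra).
  apply Rpower_1, b_pos.
Qed.

Lemma Rpower_A_p : Rpower A p = b * A.
Proof.
  replace p with ((p - 1) + 1) at 1 by ring.
  rewrite Rpower_plus, Rpower_A_pm1, Rpower_1; [reflexivity|apply A_pos].
Qed.

Lemma lam_pos : 0 < lam.
Proof. unfold lam. apply Rmult_lt_0_compat; lra. Qed.

Lemma omega_sq : omega * omega = Rmax (lam - a * a / 4) (lam / 4).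
Proof. unfold omega. apply sqrt_sqrt. pose proof lam_pos. unfold Rmax; destruct Rle_dec; lra. Qed.

Lemma omega_pos : 0 < omega.
Proof. unfold omega. apply sqrt_lt_R0. pose proof lam_pos. unfold Rmax; destruct Rle_dec; lra. Qed.

Lemma abs_beta_lam_lt : Rabs (beta - lam) < a * a / 4.
Proof.
  pose proof lam_pos. assert (0 < a * a) by nra.
  unfold beta. rewrite omega_sq. unfold Rmax; destruct Rle_dec; unfold Rabs; destruct Rcase_abs; lra.
Qed.

Lemma Lip_nonneg : 0 <= Lip.
Proof. pose proof (Rabs_pos (beta - lam)). assert (0 < a * a) by nra. unfold Lip. lra. Qed.

Lemma Lip_contraction : 4 * Lip / (a * a) < 1.
Proof.
  pose proof abs_beta_lam_lt. assert (0 < a * a) by nra.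
  apply Rmult_lt_reg_r with (a * a); [lra|].
  unfold Lip. replace (4 * ((Rabs (beta - lam) + a * a / 4) / 2) / (a * a) * (a * a))
    with (2 * Rabs (beta - lam) + a * a / 2) by (field; lra).
  lra.
Qed.

Lemma nonlin_0 : nonlin 0 = 0.
Proof. unfold nonlin. rewrite Rplus_0_r, Rpower_A_p. ring. Qed.

Lemma is_derive_nonlin x : 0 < A + x -> is_derive nonlin x (nonlin' x).
Proof.
  intros Hx. unfold nonlin, nonlin'. eapply is_derive_eq.
  - apply (is_derive_Rminus (fun x => beta * x) (fun x => Rpower (A + x) p - b * (A + x))).
    + auto_derive; auto.
    + apply is_derive_Rminus; [|auto_derive; auto].
      apply (is_derive_comp (fun y => Rpower y p) (fun x => A + x)); [apply is_derive_Rpower, Hx|].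
      auto_derive; auto.
  - unfold scal; simpl; unfold mult; simpl. ring.
Qed.

(* Since [nonlin' 0 = beta - lam], [|nonlin'| <= Lip] near [0] because [|beta - lam| < Lip]. *)
Lemma nonlin_radius :
  exists rho, 0 < rho <= A / 2 /\ forall x, Rabs x <= rho -> Rabs (nonlin' x) <= Lip.
Proof.
  pose proof A_pos. pose proof abs_beta_lam_lt as Hlt.
  set (eps := Lip - Rabs (beta - lam)).
  assert (Heps : 0 < eps) by (unfold eps, Lip; lra).
  assert (Hc : continuous (fun x => Rpower (A + x) (p - 1)) 0).
  { apply (is_derive_continuous _ _ (scal 1 ((p - 1) * Rpower (A + 0) (p - 1 - 1)))).
    apply (is_derive_comp (fun y => Rpower y (p - 1)) (fun x => A + x));
      [apply is_derive_Rpower; lra|auto_derive; auto]. }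
  destruct (proj1 (continuous_eps_delta _ _) Hc (eps / p)) as [d [Hd Hy]];
    [apply Rdiv_lt_0_compat; lra|].
  exists (Rmin (d / 2) (A / 2)). split; [split; [unfold Rmin; destruct Rle_dec; lra|apply Rmin_r]|].
  intros x Hx.
  assert (Hxd : Rabs (x - 0) < d) by (rewrite Rminus_0_r; pose proof (Rmin_l (d / 2) (A / 2)); lra).
  specialize (Hy x Hxd). rewrite Rplus_0_r in Hy.
  rewrite Rpower_A_pm1 in Hy.
  unfold nonlin'. replace (beta - (p * Rpower (A + x) (p - 1) - b))
    with ((beta - lam) - p * (Rpower (A + x) (p - 1) - b)) by (unfold lam; ring).
  eapply Rle_trans; [apply Rabs_triang|]. rewrite Rabs_Ropp, Rabs_mult, (Rabs_right p) by lra.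
  apply Rmult_lt_compat_l with (r := p) in Hy; [|lra].
  replace (p * (eps / p)) with eps in Hy by (field; lra). unfold eps in Hy. lra.
Qed.


Section Truncation.

Variable rho : R.
Hypothesis rho_pos : 0 < rho.
Hypothesis rho_le : rho <= A / 2.
Hypothesis nonlin'_le : forall x, Rabs x <= rho -> Rabs (nonlin' x) <= Lip.

Lemma nonlin_lipschitz x y :
  Rabs x <= rho -> Rabs y <= rho -> Rabs (nonlin x - nonlin y) <= Lip * Rabs (x - y).
Proof.
  pose proof A_pos. apply (derive_bound_lipschitz nonlin nonlin' rho); [|exact nonlin'_le].
  intros z Hz. apply is_derive_nonlin. apply Rabs_le_between in Hz. lra.
Qed.

Lemma nonlin_clamp_lipschitz x y :
  Rabs (nonlin (clamp rho x) - nonlin (clamp rho y)) <= Lip * Rabs (x - y).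
Proof.
  eapply Rle_trans; [apply nonlin_lipschitz; apply abs_clamp_le; lra|].
  apply Rmult_le_compat_l; [apply Lip_nonneg|apply clamp_lipschitz; lra].
Qed.

Lemma abs_nonlin_clamp_le x : Rabs (nonlin (clamp rho x)) <= Lip * rho.
Proof.
  rewrite <- (Rminus_0_r (nonlin (clamp rho x))), <- nonlin_0.
  eapply Rle_trans; [apply nonlin_lipschitz; [apply abs_clamp_le; lra|rewrite Rabs_R0; lra]|].
  rewrite Rminus_0_r. apply Rmult_le_compat_l; [apply Lip_nonneg|apply abs_clamp_le; lra].
Qed.

Section Forcing.

Variables (g : R -> R) (G0 mu : R).
Hypothesis g_cont : forall t, continuous g t.
Hypothesis g_bound : forall t, Rabs (g t) <= G0.
Hypothesis mu_nonneg : 0 <= mu.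
Hypothesis mu_small : 4 * (Lip * rho + mu * G0) / (a * a) <= rho.

Definition forcing (phi : R -> R) s := nonlin (clamp rho (phi s)) - mu * g s.

Lemma forcing_continuous phi s : (forall s, continuous phi s) -> continuous (forcing phi) s.
Proof.
  intros Hphi. unfold forcing. apply continuous_Rminus.
  - apply (continuous_comp phi (fun x => nonlin (clamp rho x))); [apply Hphi|].
    apply (lipschitz_continuous _ Lip); [apply Lip_nonneg|apply nonlin_clamp_lipschitz].
  - apply continuous_Rmult; [apply continuous_const|apply g_cont].
Qed.

Lemma abs_forcing_le phi s : Rabs (forcing phi s) <= Lip * rho + mu * G0.
Proof.
  unfold forcing, Rminus. eapply Rle_trans; [apply Rabs_triang|].
  rewrite Rabs_Ropp, Rabs_mult, (Rabs_right mu) by lra.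
  apply Rplus_le_compat; [apply abs_nonlin_clamp_le|apply Rmult_le_compat_l; auto].
Qed.

Lemma forcing_fixpoint :
  exists phi, (forall t, continuous phi t) /\ (forall t, Rabs (phi t) <= rho) /\
    forall t, osc_resolvent a omega (forcing phi) t = phi t.
Proof.
  pose proof omega_pos as Hw. pose proof Lip_contraction as Hth. pose proof Lip_nonneg as HL.
  destruct (sup_contraction_fixpoint (fun phi => osc_resolvent a omega (forcing phi))
              (4 * Lip / (a * a)) (4 * (Lip * rho + mu * G0) / (a * a))) as [phi [Hc Hfix]].
  - split; [apply Rdiv_le_0_compat; nra|exact Hth].
  - intros phi Hphi t. apply (is_derive_continuous _ _ _ (is_derive_osc_resolvent a omega a_pos
      Hw (forcing phi) _ (fun s => forcing_continuous phi s Hphi) (abs_forcing_le phi) t)).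
  - intros phi Hphi t.
    apply (abs_osc_resolvent_le a omega a_pos Hw); auto using forcing_continuous, abs_forcing_le.
  - intros phi1 phi2 D Hphi1 Hphi2 HD t.
    rewrite <- (osc_resolvent_minus a omega a_pos _ _ _ _ t)
      by auto using forcing_continuous, abs_forcing_le.
    replace (4 * Lip / (a * a) * D) with (4 * (Lip * D) / (a * a)) by (field; lra).
    apply (abs_osc_resolvent_le a omega a_pos Hw).
    + intros s. apply continuous_Rminus; apply forcing_continuous; auto.
    + intros s. unfold forcing.
      replace (nonlin (clamp rho (phi1 s)) - mu * g s - (nonlin (clamp rho (phi2 s)) - mu * g s))
        with (nonlin (clamp rho (phi1 s)) - nonlin (clamp rho (phi2 s))) by ring.
      eapply Rle_trans; [apply nonlin_clamp_lipschitz|apply Rmult_le_compat_l; auto].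
  - exists phi. split; [exact Hc|split; [|exact Hfix]].
    intros t. rewrite <- Hfix. eapply Rle_trans; [|exact mu_small].
    apply (abs_osc_resolvent_le a omega a_pos Hw); auto using forcing_continuous, abs_forcing_le.
Qed.

Lemma forced_profile :
  exists W W1 W2 : R -> R, forall t,
    is_derive W t (W1 t) /\ is_derive W1 t (W2 t) /\ continuous W2 t /\ A / 2 <= W t /\
    W2 t + a * W1 t - b * W t + Rpower (W t) p + mu * g t = 0.
Proof.
  pose proof omega_pos as Hw.
  destruct forcing_fixpoint as [phi [Hc [Hsmall Hfix]]].
  set (F := forcing phi).
  assert (HF : forall s, continuous F s) by (intros; apply forcing_continuous; auto).
  pose proof (abs_forcing_le phi) as HFb.
  set (v := osc_velocity a omega F).
  exists (fun t => A + phi t), v, (fun t => F t - a * v t - beta * phi t).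
  intros t. split; [|split; [|split; [|split]]].
  - apply (is_derive_ext (fun t => A + osc_resolvent a omega F t)); [intros; rewrite Hfix; reflexivity|].
    eapply is_derive_eq.
    + apply is_derive_Rplus; [apply (is_derive_const (K := R_AbsRing) (V := R_NormedModule))|].
      apply (is_derive_osc_resolvent a omega a_pos Hw F _ HF HFb).
    + apply Rplus_0_l.
  - eapply is_derive_eq; [apply (is_derive_osc_velocity a omega a_pos Hw F _ HF HFb)|].
    rewrite Hfix. reflexivity.
  - apply continuous_Rminus; [apply continuous_Rminus; [apply HF|]|];
      apply continuous_Rmult; auto using continuous_const.
    apply (is_derive_continuous _ _ _ (is_derive_osc_velocity a omega a_pos Hw F _ HF HFb t)).
  - pose proof (Hsmall t) as Ht. apply Rabs_le_between in Ht. lra.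
  - unfold F, forcing. rewrite clamp_id by auto. unfold nonlin. ring.
Qed.

End Forcing.

End Truncation.

Lemma perturbed_constant_solution (g : R -> R) G0 :
  (forall t, continuous g t) -> 0 < G0 -> (forall t, Rabs (g t) <= G0) ->
  exists mu1, 0 < mu1 /\ forall mu, 0 <= mu < mu1 ->
    exists W W1 W2 : R -> R, forall t,
      is_derive W t (W1 t) /\ is_derive W1 t (W2 t) /\ continuous W2 t /\ A / 2 <= W t /\
      W2 t + a * W1 t - b * W t + Rpower (W t) p + mu * g t = 0.
Proof.
  intros Hg HG0 Hgb.
  destruct nonlin_radius as [rho [[Hrho HrhoA] Hrad]].
  pose proof Lip_contraction as Hth. assert (Ha2 : 0 < a * a) by nra.
  exists ((1 - 4 * Lip / (a * a)) * rho * (a * a) / (4 * G0)). split.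
  - apply Rdiv_lt_0_compat; [|lra]. apply Rmult_lt_0_compat; [apply Rmult_lt_0_compat|]; lra.
  - intros mu [Hmu0 Hmu1]. apply (forced_profile rho) with (G0 := G0); auto.
    assert (Hm : mu * G0 < rho * (a * a) / 4 - Lip * rho).
    { apply (Rmult_lt_compat_r G0) in Hmu1; [|lra].
      replace ((1 - 4 * Lip / (a * a)) * rho * (a * a) / (4 * G0) * G0)
        with (rho * (a * a) / 4 - Lip * rho) in Hmu1 by (field; lra).
      exact Hmu1. }
    apply Rmult_le_reg_r with (a * a); [lra|].
    replace (4 * (Lip * rho + mu * G0) / (a * a) * (a * a)) with (4 * (Lip * rho + mu * G0))
      by (field; lra).
    lra.
Qed.

End PerturbedConstantSolution.

Lemma supercritical_exponent (N : nat) alpha p :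
  (3 <= N)%nat -> -2 < alpha -> pS N alpha < p ->
  1 < p /\ 0 < (2 + alpha) / (p - 1) /\ 2 * ((2 + alpha) / (p - 1)) < INR N - 2.
Proof.
  intros HN Hal Hp. unfold pS in Hp.
  assert (HN3 : 3 <= INR N) by (apply le_INR in HN; simpl in HN; lra).
  apply (Rmult_lt_compat_r (INR N - 2)) in Hp; [|lra].
  replace ((INR N + 2 + 2 * alpha) / (INR N - 2) * (INR N - 2)) with (INR N + 2 + 2 * alpha) in Hp
    by (field; lra).
  assert (Hp1 : 1 < p) by nra.
  split; [exact Hp1|split; [apply Rdiv_lt_0_compat; lra|]].
  apply Rmult_lt_reg_r with (p - 1); [lra|].
  replace (2 * ((2 + alpha) / (p - 1)) * (p - 1)) with (2 * (2 + alpha)) by (field; lra). nra.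
Qed.

Lemma abs_bounded_on_segment (f : R -> R) x y :
  (forall r, x <= r <= y -> continuous f r) ->
  exists M, 0 <= M /\ forall r, x <= r <= y -> Rabs (f r) <= M.
Proof.
  intros Hcont. destruct (Rle_dec x y) as [Hxy|Hxy].
  - destruct (continuity_ab_maj (fun r => Rabs (f r)) x y Hxy) as [Mx [HMx _]].
    + intros c Hc. apply continuity_pt_filterlim, continuous_Rabs_comp, Hcont, Hc.
    + exists (Rabs (f Mx)). split; [apply Rabs_pos|]. intros r Hr. apply HMx, Hr.
  - exists 0. split; [lra|]. intros r Hr. lra.
Qed.

Lemma F0_Finf_weighted_bound (f : R -> R) (N : nat) k :
  (forall r, 0 < r -> continuous f r) -> F0 f -> Finf N f -> 2 <= k <= INR N ->
  exists G0, 0 < G0 /\ forall r, 0 < r -> Rpower r k * Rabs (f r) <= G0.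
Proof.
  intros Hcont [nu [Hnu [C [delta [Hdel HC]]]]] [q [Hq [C' [R0 HC']]]] Hk.
  set (R1 := Rmax R0 1).
  assert (HR1 : 1 <= R1) by apply Rmax_r.
  assert (HR0 : R0 <= R1) by apply Rmax_l.
  destruct (abs_bounded_on_segment f delta R1) as [Mf [HMf0 HMf]];
    [intros r Hr; apply Hcont; lra|].
  pose proof (Rpower_gt_0 delta (k + nu)) as Hdk. pose proof (Rpower_gt_0 R1 k) as HRk.
  pose proof (Rabs_pos C) as HC0. pose proof (Rabs_pos C') as HC'0.
  exists (Rabs C * Rpower delta (k + nu) + Rabs C' + Rpower R1 k * Mf + 1).
  split; [nra|]. intros r Hr. pose proof (Rpower_gt_0 r k) as Hrk.
  destruct (Rlt_dec r delta) as [Hr0|Hr0]; [|destruct (Rlt_dec R1 r) as [Hr1|Hr1]].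
  -     assert (Rabs (f r) <= Rabs C * Rpower r nu)
      by (eapply Rle_trans; [apply HC; lra|apply Rmult_le_compat_r; [left; apply Rpower_gt_0|apply Rle_abs]]).
    assert (Rpower r (k + nu) <= Rpower delta (k + nu)) by (apply Rle_Rpower_l; lra).
    assert (Rpower r k * Rabs (f r) <= Rabs C * Rpower r (k + nu))
      by (rewrite Rpower_plus; apply Rmult_le_compat_l with (r := Rpower r k) in H; nra).
    assert (Rabs C * Rpower r (k + nu) <= Rabs C * Rpower delta (k + nu))
      by (apply Rmult_le_compat_l; lra).
    nra.
  -     assert (Rabs (f r) <= Rabs C' * Rpower r (- q))
      by (eapply Rle_trans; [apply HC'; lra|apply Rmult_le_compat_r; [left; apply Rpower_gt_0|apply Rle_abs]]).
    assert (Hkq : Rpower r (k + - q) <= Rpower r 0) by (apply Rle_Rpower; lra).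
    rewrite Rpower_O, Rpower_plus in Hkq by lra.
    assert (Rpower r k * Rabs (f r) <= Rabs C' * (Rpower r k * Rpower r (- q)))
      by (apply Rmult_le_compat_l with (r := Rpower r k) in H; nra).
    assert (Rabs C' * (Rpower r k * Rpower r (- q)) <= Rabs C') by nra.
    nra.
  - assert (Rabs (f r) <= Mf) by (apply HMf; lra).
    assert (Rpower r k <= Rpower R1 k) by (apply Rle_Rpower_l; lra).
    pose proof (Rabs_pos (f r)). nra.
Qed.

Lemma Rpower_pred r e : 0 < r -> Rpower r (e - 1) = Rpower r e / r.
Proof. intros Hr. unfold Rminus. rewrite Rpower_plus, Rpower_Ropp, Rpower_1 by exact Hr. reflexivity. Qed.

Lemma is_derive_Rpower_ln e (Z Z1 : R -> R) r : 0 < r -> is_derive Z (ln r) (Z1 (ln r)) ->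
  is_derive (fun r => Rpower r e * Z (ln r)) r (Rpower r (e - 1) * (Z1 (ln r) + e * Z (ln r))).
Proof.
  intros Hr HZ. eapply is_derive_eq.
  - apply (is_derive_Rmult (fun r => Rpower r e) (fun r => Z (ln r)) r _ _
             (is_derive_Rpower r e Hr) (is_derive_comp Z ln r _ _ HZ (is_derive_ln r Hr))).
  - rewrite (Rpower_pred r e) by exact Hr. unfold scal; simpl; unfold mult; simpl. field. lra.
Qed.

Lemma Rpower_emden_fowler r v alpha p m : 0 < r -> 0 < v -> m * (p - 1) = 2 + alpha ->
  Rpower r alpha * Rpower (Rpower r (- m) * v) p = Rpower r (- m - 1 - 1) * Rpower v p.
Proof.
  intros Hr Hv Hm.
  rewrite <- Rpower_mult_distr, Rpower_mult, <- Rmult_assoc, <- Rpower_plus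
    by (apply Rpower_gt_0 || exact Hv).
  f_equal. f_equal. nra.
Qed.

Lemma emden_fowler_transform (N : nat) alpha p mu m (f W W1 W2 : R -> R) :
  m * (p - 1) = 2 + alpha ->
  (forall t, is_derive W t (W1 t) /\ is_derive W1 t (W2 t) /\ continuous W2 t /\ 0 < W t /\
     W2 t + (INR N - 2 - 2 * m) * W1 t - m * (INR N - 2 - m) * W t + Rpower (W t) p
       + mu * (Rpower (exp t) (m + 2) * f (exp t)) = 0) ->
  exists u1 u2 : R -> R, forall r, 0 < r ->
    is_derive (fun r => Rpower r (- m) * W (ln r)) r (u1 r) /\ is_derive u1 r (u2 r) /\
    continuous u2 r /\ 0 < Rpower r (- m) * W (ln r) /\
    u2 r + (INR N - 1) / r * u1 r + Rpower r alpha * Rpower (Rpower r (- m) * W (ln r)) p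
      + mu * f r = 0.
Proof.
  intros Hm HW.
  set (Z := fun t => W1 t + - m * W t).
  assert (DW : forall t, is_derive W t (W1 t)) by apply HW.
  assert (DW1 : forall t, is_derive W1 t (W2 t)) by apply HW.
  assert (DZ : forall t, is_derive Z t (W2 t + - m * W1 t))
    by (intros t; apply is_derive_Rplus; [|apply is_derive_scal]; auto).
  exists (fun r => Rpower r (- m - 1) * Z (ln r)),
         (fun r => Rpower r (- m - 1 - 1) * (W2 (ln r) + - m * W1 (ln r) + (- m - 1) * Z (ln r))).
  intros r Hr.
  destruct (HW (ln r)) as [_ [_ [HW2c [HWpos Hode]]]].
  split; [|split; [|split; [|split]]].
  - apply is_derive_Rpower_ln; [exact Hr|apply DW].
  - apply (is_derive_Rpower_ln (- m - 1) Z (fun t => W2 t + - m * W1 t)); [exact Hr|apply DZ].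
  - apply continuous_Rmult; [apply (is_derive_continuous _ _ _ (is_derive_Rpower r _ Hr))|].
    apply (continuous_comp ln (fun t => W2 t + - m * W1 t + (- m - 1) * Z t));
      [apply (is_derive_continuous _ _ _ (is_derive_ln r Hr))|].
    pose proof (is_derive_continuous _ _ _ (DW (ln r))).
    pose proof (is_derive_continuous _ _ _ (DW1 (ln r))).
    unfold Z. repeat first [apply continuous_Rplus | apply continuous_Rmult];
      auto using continuous_const.
  - apply Rmult_lt_0_compat; [apply Rpower_gt_0|exact HWpos].
  - rewrite (Rpower_emden_fowler r _ alpha p m Hr HWpos Hm).
    assert (EY : Rpower r (- m - 1) = Rpower r (- m - 1 - 1) * r)
      by (rewrite (Rpower_pred r (- m - 1)) by exact Hr; field; lra).
    assert (Ef : f r = Rpower r (- m - 1 - 1) * (Rpower (exp (ln r)) (m + 2) * f (exp (ln r)))).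
    { rewrite exp_ln, <- Rmult_assoc, <- Rpower_plus by exact Hr.
      replace (- m - 1 - 1 + (m + 2)) with 0 by ring. rewrite Rpower_O by exact Hr. ring. }
    rewrite EY, Ef.
    transitivity (Rpower r (- m - 1 - 1) *
      (W2 (ln r) + (INR N - 2 - 2 * m) * W1 (ln r) - m * (INR N - 2 - m) * W (ln r)
       + Rpower (W (ln r)) p + mu * (Rpower (exp (ln r)) (m + 2) * f (exp (ln r))))).
    + unfold Z. field. lra.
    + rewrite Hode. ring.
Qed.

Lemma power_lower_bound_blowup (u : R -> R) c m :
  0 < c -> 0 < m -> (forall r, 0 < r -> c * Rpower r (- m) <= u r) ->
  filterlim u (at_right 0) (Rbar_locally p_infty).
Proof.
  intros Hc Hm Hu P [M HM].
  set (M' := Rmax M 1). assert (HM' : 1 <= M') by apply Rmax_r.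
  set (del := Rpower (c / M') (1 / m)).
  exists (mkposreal del (Rpower_gt_0 _ _)). intros y Hy Hy0. apply HM.
  assert (Hyd : y < del).
  { unfold ball in Hy; simpl in Hy; unfold AbsRing_ball, abs, minus, plus, opp in Hy; simpl in Hy.
    rewrite Ropp_0, Rplus_0_r, Rabs_right in Hy by lra. exact Hy. }
  assert (Hym : Rpower y m < c / M').
  { replace (c / M') with (Rpower del m).
    - apply Rlt_Rpower_l; auto.
    - unfold del. rewrite Rpower_mult. replace (1 / m * m) with 1 by (field; lra).
      apply Rpower_1, Rdiv_lt_0_compat; lra. }
  pose proof (Rpower_gt_0 y m). pose proof (Hu y Hy0) as Huy. rewrite Rpower_Ropp in Huy.
  assert (M' < c * / Rpower y m).
  { apply Rmult_lt_reg_r with (Rpower y m); [lra|].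
    replace (c * / Rpower y m * Rpower y m) with c by (field; lra).
    apply (Rmult_lt_compat_l M') in Hym; [|lra].
    replace (M' * (c / M')) with c in Hym by (field; lra). lra. }
  assert (M <= M') by apply Rmax_l. lra.
Qed.

Lemma power_lower_bound_slow_decay (N : nat) (u : R -> R) c m :
  (2 <= N)%nat -> 0 < c -> m < INR N - 2 -> (forall r, 0 < r -> c * Rpower r (- m) <= u r) ->
  slow_decay N u.
Proof.
  intros HN Hc Hm Hu M R0.
  set (k := INR N - 2 - m). assert (Hk : 0 < k) by (unfold k; lra).
  set (M' := Rmax M 1). assert (HM' : 1 <= M') by apply Rmax_r.
  set (r0 := Rpower (M' / c) (1 / k)). assert (Hr0 : 0 < r0) by apply Rpower_gt_0.
  set (r := Rmax (R0 + 1) (r0 + 1)).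
  assert (R0 + 1 <= r) by apply Rmax_l. assert (r0 + 1 <= r) by apply Rmax_r.
  assert (Hr : 0 < r) by lra.
  exists r. split; [lra|split; [exact Hr|]].
  assert (Hrk : M' / c < Rpower r k).
  { replace (M' / c) with (Rpower r0 k).
    - apply Rlt_Rpower_l; [exact Hk|lra].
    - unfold r0. rewrite Rpower_mult. replace (1 / k * k) with 1 by (field; lra).
      apply Rpower_1, Rdiv_lt_0_compat; lra. }
  rewrite <- Rpower_pow, minus_INR by (exact Hr || exact HN). simpl (INR 2).
  apply Rlt_le_trans with (Rpower r (INR N - 2) * (c * Rpower r (- m))).
  - rewrite Rmult_comm, Rmult_assoc, <- Rpower_plus.
    replace (- m + (INR N - 2)) with k by (unfold k; ring).
    apply (Rmult_lt_compat_l c) in Hrk; [|exact Hc].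
    replace (c * (M' / c)) with M' in Hrk by (field; lra).
    assert (M <= M') by apply Rmax_l. lra.
  - apply Rmult_le_compat_l; [left; apply Rpower_gt_0|apply Hu, Hr].
Qed.

Lemma emden_fowler_forcing (f : R -> R) (N : nat) k :
  (forall r, 0 < r -> continuous f r) -> F0 f -> Finf N f -> 2 <= k <= INR N ->
  exists G0, 0 < G0 /\
    (forall t, continuous (fun t => Rpower (exp t) k * f (exp t)) t) /\
    (forall t, Rabs (Rpower (exp t) k * f (exp t)) <= G0).
Proof.
  intros Hfc HF0 HFinf Hk.
  destruct (F0_Finf_weighted_bound f N k Hfc HF0 HFinf Hk) as [G0 [HG0 Hbound]].
  exists G0. split; [exact HG0|split].
  - intros t. apply continuous_Rmult.
    + apply (continuous_comp exp (fun y => Rpower y k)); [apply continuous_exp|].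
      apply (is_derive_continuous _ _ _ (is_derive_Rpower _ k (exp_pos t))).
    + apply (continuous_comp exp f); [apply continuous_exp|apply Hfc, exp_pos].
  - intros t. rewrite Rabs_mult, (Rabs_right (Rpower _ _)) by (left; apply Rpower_gt_0).
    apply Hbound, exp_pos.
Qed.

Theorem corollary1p7 (N : nat) (alpha p : R) (f : R -> R) :
  (3 <= N)%nat -> -2 < alpha -> pS N alpha < p ->
  admissible_f f -> F0 f -> Finf N f ->
  exists mu1, 0 < mu1 /\
    forall mu, 0 <= mu < mu1 ->
      exists u : R -> R, singular_solution N alpha p mu f u /\ slow_decay N u.
Proof.
  intros HN Hal Hp [Hfc _] HF0 HFinf.
  destruct (supercritical_exponent N alpha p HN Hal Hp) as [Hp1 [Hm Hm2]].
  set (m := (2 + alpha) / (p - 1)) in *.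
  destruct (emden_fowler_forcing f N (m + 2) Hfc HF0 HFinf) as [G0 [HG0 [Hg Hgb]]]; [lra|].
  destruct (perturbed_constant_solution (INR N - 2 - 2 * m) (m * (INR N - 2 - m)) p
              ltac:(lra) ltac:(nra) Hp1 _ G0 Hg HG0 Hgb) as [mu1 [Hmu1 Hsol]].
  exists mu1. split; [exact Hmu1|]. intros mu Hmu.
  destruct (Hsol mu Hmu) as [W [W1 [W2 HW]]].
  set (c := A (m * (INR N - 2 - m)) p / 2).
  assert (Hc : 0 < c) by (pose proof (A_pos (m * (INR N - 2 - m)) p); unfold c; lra).
  assert (Hlow : forall r, 0 < r -> c * Rpower r (- m) <= Rpower r (- m) * W (ln r)).
  { intros r _. destruct (HW (ln r)) as [_ [_ [_ [HWr _]]]].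
    rewrite Rmult_comm. apply Rmult_le_compat_l; [left; apply Rpower_gt_0|exact HWr]. }
  exists (fun r => Rpower r (- m) * W (ln r)). split.
  - destruct (emden_fowler_transform N alpha p mu m f W W1 W2) as [u1 [u2 Hu]].
    + unfold m. field. lra.
    + intros t. destruct (HW t) as [D1 [D2 [C2 [HWt E]]]].
      refine (conj D1 (conj D2 (conj C2 (conj _ E)))). unfold c in Hc. lra.
    + exists u1, u2. split; [exact Hu|].
      apply (power_lower_bound_blowup _ c m); auto.
  - apply (power_lower_bound_slow_decay N _ c m); auto; [lia|lra].
Qed.
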